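(* Let a countable group $G$ act freely and continuously on a zero-dimensional Polish space $X$. Let $E$ be a finite $G$-clopen equivalence relation on $X$ and suppose there is a finite set $K\subseteq G$ with $[x]_E\subseteq K\cdot x$ for all $x\in X$. Then there is a continuous, $G$-clopen function $S:X\to X$ (a selector for $E$) such that for all $x,y\in X$, $x\mathrel{E}S(x)$, and $x\mathrel{E}y\iff S(x)=S(y)$.
   Context: A relation $R\subseteq X\times X$ (in particular the graph $\{(x,S(x))\}$ of a function $S$) is $G$-clopen if for every $g\in G$ the set $\{x\in X:(x,g\cdot x)\in R\}$ is clopen. $E$ is finite if each class $[x]_E$ is finite. *)

From HB Require Import structures.
From mathcomp Require Import all_boot all_order all_algebra.
From mathcomp Require Import monoid.
From mathcomp Require Import all_classical all_reals all_analysis.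

Set Implicit Arguments.
Unset Strict Implicit.
Unset Printing Implicit Defensive.

Local Open Scope classical_set_scope.

(* Zero-dimensional: the topology has a basis of clopen sets. *)
Definition clopen_basis (T : topologicalType) : Prop :=
  forall (U : set T) (x : T), open U -> U x ->
    exists V : set T, [/\ clopen V, V x & V `<=` U].

(* Polish: X carries a complete (pseudo)metric inducing its topology
   (encoded by X : completePseudoMetricType R), is Hausdorff (so the
   pseudometric is a metric), and is separable. *)
Definition separable_space (T : topologicalType) : Prop :=
  exists D : set T, countable D /\ dense D.

Definition is_group_action (G : groupType) (X : Type) (act : G -> X -> X) : Prop :=
  (forall x, act 1%g x = x) /\
  (forall g h x, act (g * h)%g x = act g (act h x)).

Definition free_action (G : groupType) (X : Type) (act : G -> X -> X) : Prop :=
  forall g x, act g x = x -> g = 1%g.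

Definition G_clopen (G : groupType) (X : topologicalType)
  (act : G -> X -> X) (R : X -> X -> Prop) : Prop :=
  forall g : G, clopen [set x | R x (act g x)].

Definition equiv_relP (X : Type) (E : X -> X -> Prop) : Prop :=
  [/\ forall x, E x x,
      forall x y, E x y -> E y x &
      forall x y z, E x y -> E y z -> E x z].

Definition finite_classes (X : Type) (E : X -> X -> Prop) : Prop :=
  forall x, finite_set [set y | E x y].

From HB Require Import structures.
From mathcomp Require Import all_boot all_order all_algebra.
From mathcomp Require Import monoid.
From mathcomp Require Import all_classical all_reals all_analysis.
From mathcomp Require Import lra.

(* Separability and zero-dimensionality give a sequence of clopen sets C_i
   separating points, hence a lexicographic strict total order on X in which a
   strict inequality between two continuous maps persists near a point.  Let
   S x be the least element of the finite class [x]_E.  The candidates are the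
   finitely many k x with k in K; near any x each of them keeps its membership
   in the class (E is G-clopen) and its order relative to the others, so S
   agrees with a single translation k near x.  A map that is locally a
   translation is continuous, and by freeness it is G-clopen. *)

Local Open Scope classical_set_scope.

Lemma filter_forall_finite_set (T : Type) (I : choiceType) (F : set_system T)
    (A : set I) (P : I -> T -> Prop) : Filter F -> finite_set A ->
  (forall i, A i -> \forall x \near F, P i x) ->
  \forall x \near F, forall i, A i -> P i x.
Proof.
move=> FF /finite_fsetP[B ->] FP.
by apply: filterS (filter_bigI (f := fun i => [set x | P i x]) FF FP) => x PBx i /PBx.
Qed.

Lemma near_clopen {T : topologicalType} {A : set T} (x : T) :
  clopen A -> \forall y \near x, A y <-> A x.
Proof.
move=> [oA cA]; have [Ax|nAx] := pselect (A x).
  by apply: filterS (open_nbhs_nbhs (conj oA Ax)) => y.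
have oAC : open (~` A) by rewrite openC.
by apply: filterS (open_nbhs_nbhs (conj oAC nAx)) => y.
Qed.

Lemma clopen_basis_zero_dimensional {T : topologicalType} :
  hausdorff_space T -> clopen_basis T -> zero_dimensional T.
Proof.
move=> hT cbT x y xy; have [U [oU Ux nUy]] := hausdorff_accessible hT xy.
have [V [cV Vx VU]] := cbT U x oU (set_mem Ux).
by exists V; split => // /VU; move: nUy; rewrite inE.
Qed.

Lemma countable_sub_range {T : choiceType} {A : set T} (x0 : T) :
  countable A -> exists g : nat -> T, A `<=` range g.
Proof.
move=> /countable_injP[f finj].
exists (fun k => xget x0 [set d | A d /\ f d = k]) => d Ad; exists (f d) => //.
set P := [set d' | A d' /\ f d' = f d].
have [Ax fx] : P (xget x0 P) by apply: xgetPex; exists d.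
by apply: finj; rewrite ?inE.
Qed.

Section CountableBallBasis.
Import Order.TTheory GRing.Theory Num.Theory.
Local Open Scope ring_scope.
Variables (R : realType) (X : pseudoMetricType R) (g : nat -> X).

Definition range_ball (p : nat * nat) : set X := ball (g p.1) p.2.+1%:R^-1.

Lemma dense_range_ball_basis (y : X) (U : set X) : dense (range g) -> nbhs y U ->
  exists p, range_ball p y /\ range_ball p `<=` U.
Proof.
move=> dg /nbhs_ballP[e /= e0 yeU].
have [|n] := @ltr_add_invr R 0 (e / 2); first by lra.
rewrite add0r => ne; set r := n.+1%:R^-1 in ne.
have r0 : 0 < r by rewrite invr_gt0.
have [oyr yr] := open_nbhs_ball y (PosNum r0).
have [z [yz [k _ gk]]] := dg _ (ex_intro _ y yr) oyr.
have ykr : ball y r (g k) by rewrite gk; exact: interior_subset.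
exists (k, n); split; first exact: ball_sym.
move=> w /(ball_triangle ykr) yw; apply: yeU.
by apply: le_ball yw; rewrite /= -/r; lra.
Qed.

End CountableBallBasis.

Arguments range_ball {R X} g p.
Arguments dense_range_ball_basis {R X g y U}.

Lemma separating_clopen_seq {R : realType} {X : pseudoMetricType R} :
  separable_space X -> zero_dimensional X ->
  exists C : nat -> set X, (forall i, clopen (C i)) /\
    (forall y z, y <> z -> exists i, C i y /\ ~ C i z).
Proof.
move=> [D [cD dD]] zdX.
have [[x0 _]|X0] := pselect (exists x : X, True); last first.
  by exists (fun=> set0); split => [i|y]; [exact: clopen0 | case: X0; exists y].
have [g Dg] := countable_sub_range x0 cD.
have dg : dense (range g).
  by move=> O O0 oO; have [x [Ox /Dg gx]] := dD O O0 oO; exists x.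
pose separates (pq : (nat * nat) * (nat * nat)) (V : set X) :=
  [/\ clopen V, range_ball g pq.1 `<=` V & range_ball g pq.2 `<=` ~` V].
have /choice[W sepW] : forall pq, exists W,
    clopen W /\ ((exists V, separates pq V) -> separates pq W).
  move=> pq; have [[V sV]|nsV] := pselect (exists V, separates pq V).
    by exists V; split => //; case: sV.
  by exists set0; split => [|[V sV]]; [exact: clopen0 | case: nsV; exists V].
exists (fun i => if unpickle i is Some pq then W pq else set0); split.
  by move=> i; case: unpickle => [pq|]; [exact: (sepW pq).1 | exact: clopen0].
move=> y z /eqP yz; have [V [[oV cV] Vy nVz]] := zdX y z yz.
have oVC : open (~` V) by rewrite openC.
have [p [py pV]] := dense_range_ball_basis dg (open_nbhs_nbhs (conj oV Vy)).
have [q [qz qV]] := dense_range_ball_basis dg (open_nbhs_nbhs (conj oVC nVz)).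
have [_ pW qW] : separates (p, q) (W (p, q)).
  by apply: (sepW (p, q)).2; exists V; split.
by exists (pickle (p, q)); rewrite pickleK; split; [exact: pW | exact: qW].
Qed.

Section LeastElement.
Variables (T : Type) (lt : T -> T -> Prop).
Hypothesis lt_trans : forall x y z, lt x y -> lt y z -> lt x z.
Hypothesis lt_irr : forall x, ~ lt x x.
Hypothesis lt_total : forall x y, x <> y -> lt x y \/ lt y x.

Definition least (A : set T) (m : T) := A m /\ forall y, A y -> y = m \/ lt m y.

Lemma least_unique (A : set T) (m m' : T) : least A m -> least A m' -> m = m'.
Proof.
move=> [Am minA] [Am' minA'].
case: (minA _ Am') => [->//|mm']; case: (minA' _ Am) => [->//|m'm].
by case: (lt_irr m); apply: lt_trans mm' m'm.
Qed.

Lemma finite_set_least (A : set T) : finite_set A -> A !=set0 -> exists m, least A m.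
Proof.
move=> /finite_setP[n]; elim: n A => [A|n IHn A /eq_cardSP[a Aa /IHn {}IHn] _].
  by rewrite II0 card_eq0 => /eqP -> [].
have Aa_or : forall y, A y -> y = a \/ (A `\ a) y.
  by move=> y Ay; have [ya|ya] := pselect (y = a); [left|right].
have [/IHn[m [[Am ma] minA]]|A0] := pselect ((A `\ a) !=set0); last first.
  exists a; split => // y /Aa_or[|Aay]; first by left.
  by case: A0; exists y.
have [lt_am|lt_ma] : lt a m \/ lt m a by apply: lt_total => am; apply: ma; rewrite am.
- exists a; split => // y /Aa_or[|/minA[->|my]]; [by left|by right|].
  by right; apply: lt_trans lt_am my.
- exists m; split => // y /Aa_or[->|/minA]; [by right|by []].
Qed.

Lemma least_class_selector (E : T -> T -> Prop) (S : T -> T) : equiv_relP E ->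
  (forall x, least (E x) (S x)) -> forall x y, E x y <-> S x = S y.
Proof.
move=> [_ Esym Etrans] leastS x y; split => [Exy|SxSy].
  apply: least_unique (leastS x) _; have [EyS minSy] := leastS y.
  split => [|z Exz]; first exact: Etrans Exy EyS.
  by apply: minSy; apply: Etrans (Esym _ _ Exy) Exz.
have [ExS _] := leastS x; have [EyS _] := leastS y.
by apply: Etrans ExS _; rewrite SxSy; apply: Esym.
Qed.

End LeastElement.

Arguments least {T} lt A m.
Arguments least_unique {T lt} lt_trans lt_irr {A m m'}.
Arguments finite_set_least {T lt} lt_trans lt_total {A}.
Arguments least_class_selector {T lt} lt_trans lt_irr {E S}.

Section Lexicographic.
Variables (X : Type) (C : nat -> set X).

Definition lexlt (y z : X) :=
  exists i, [/\ C i y, ~ C i z & forall j, (j < i)%N -> (C j y <-> C j z)].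

Lemma lexlt_irr (y : X) : ~ lexlt y y.
Proof. by case=> i []. Qed.

Lemma lexlt_trans (y z w : X) : lexlt y z -> lexlt z w -> lexlt y w.
Proof.
move=> [i [Ciy nCiz yz]] [j [Cjz nCjw zw]].
have [ij|ji|eij] := ltngtP i j; last subst j.
- exists i; split => [//||k ki]; first by move/(zw i ij).
  by rewrite (yz k ki); apply: zw; apply: ltn_trans ki ij.
- exists j; split => [|//|k kj]; first exact/(yz j ji).
  by rewrite (yz k (ltn_trans kj ji)); apply: zw.
- by exists i; split => [//||k ki]; [|rewrite (yz k ki); apply: zw].
Qed.

Hypothesis C_separating : forall y z, y <> z -> exists i, C i y /\ ~ C i z.

Lemma lexlt_total (y z : X) : y <> z -> lexlt y z \/ lexlt z y.
Proof.
move=> yz; pose differ i := `[< ~ (C i y <-> C i z) >].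
have ex_differ : exists i, differ i.
  have [i [Ciy nCiz]] := C_separating _ _ yz.
  by exists i; apply/asboolP => -[/(_ Ciy)].
case: (ex_minnP ex_differ) => i /asboolP differ_i min_i.
have agree j : (j < i)%N -> (C j y <-> C j z).
  move=> ji; apply: contrapT => /asboolP /min_i.
  by rewrite leqNgt ji.
have [Ciy|nCiy] := pselect (C i y).
  by left; exists i; split => // Ciz; apply: differ_i.
right; exists i; split => [|//|j /agree yzj]; last by split => /yzj.
by apply: contrapT => nCiz; apply: differ_i.
Qed.

End Lexicographic.

Arguments lexlt {X} C y z.
Arguments lexlt_total {X C}.

Lemma near_lexlt {T X : topologicalType} {C : nat -> set X} {f g : T -> X} {x : T} :
  (forall i, clopen (C i)) -> {for x, continuous f} -> {for x, continuous g} ->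
  lexlt C (f x) (g x) -> \forall y \near x, lexlt C (f y) (g y).
Proof.
move=> cC cf cg [i [Cfx nCgx fgx]].
have : \forall y \near x, forall j, `I_i.+1 j ->
    (C j (f y) <-> C j (f x)) /\ (C j (g y) <-> C j (g x)).
  apply: filter_forall_finite_set => // j _.
  have fj : \forall y \near x, C j (f y) <-> C j (f x) := cf _ (near_clopen _ (cC j)).
  have gj : \forall y \near x, C j (g y) <-> C j (g x) := cg _ (near_clopen _ (cC j)).
  exact: filterS2 fj gj.
apply: filterS => y near_i; have [fi gi] := near_i i (ltnSn i).
exists i; split => [||j ji]; [by apply/fi|by move/gi|].
have [fj gj] := near_i j (ltn_trans ji (ltnSn i)).
by rewrite fj gj; apply: fgx.
Qed.

Section LocallyActing.
Variables (G : groupType) (X : topologicalType) (act : G -> X -> X).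
Hypothesis act_action : is_group_action act.
Hypothesis act_free : free_action act.

Lemma free_act_inj (a b : G) (x : X) : act a x = act b x -> a = b.
Proof.
case: act_action => act1 actM ab.
have /act_free ba1 : act (b^-1 * a)%g x = x by rewrite actM ab -actM mulVg act1.
by rewrite -(mulVKg b a) ba1 mulg1.
Qed.

Definition locally_act (S : X -> X) := forall x : X, exists k, \forall y \near x, S y = act k y.

Lemma locally_act_continuous (S : X -> X) :
  (forall g, continuous (act g)) -> locally_act S -> continuous S.
Proof.
move=> cact locS x; have [k Sk] := locS x.
rewrite /continuous_at (nbhs_singleton Sk).
by apply: cvg_trans (cact k x); apply: near_eq_cvg; apply: filterS Sk => y ->.
Qed.

Lemma locally_act_G_clopen (S : X -> X) :
  locally_act S -> G_clopen act (fun x y => y = S x).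
Proof.
move=> locS g; split.
  rewrite openE => x /= gS; have [k Sk] := locS x.
  have gk : g = k by apply: (@free_act_inj _ _ x); rewrite gS (nbhs_singleton Sk).
  by rewrite /interior; apply: filterS Sk => y Sy; rewrite /= Sy gk.
rewrite -openC openE => x /= ngS; have [k Sk] := locS x.
have Sx := nbhs_singleton Sk.
rewrite /interior; apply: filterS Sk => y Sy gS; apply: ngS.
have -> : g = k by apply: (@free_act_inj _ _ y); rewrite gS.
by rewrite Sx.
Qed.

End LocallyActing.

Arguments locally_act {G X} act S.
Arguments free_act_inj {G X act}.

Section LeastSelector.
Variables (G : groupType) (X : topologicalType) (act : G -> X -> X).
Variables (E : X -> X -> Prop) (K : set G) (C : nat -> set X).
Hypothesis act_action : is_group_action act.
Hypothesis act_free : free_action act.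
Hypothesis act_continuous : forall g, continuous (act g).
Hypothesis E_G_clopen : G_clopen act E.
Hypothesis K_finite : finite_set K.
Hypothesis E_within_K : forall x y, E x y -> exists2 k, K k & y = act k x.
Hypothesis C_clopen : forall i, clopen (C i).

Lemma least_selector_locally_act (S : X -> X) :
  (forall x, least (lexlt C) (E x) (S x)) -> locally_act act S.
Proof.
move=> leastS x; have [ExS minSx] := leastS x.
have [k Kk Sx] := E_within_K _ _ ExS; exists k.
have Ek : \forall y \near x, E y (act k y).
  by apply: filterS (near_clopen x (E_G_clopen k)) => y /= ->; rewrite -Sx.
have above : \forall y \near x, forall k', K k' -> E y (act k' y) ->
    act k' y = act k y \/ lexlt C (act k y) (act k' y).
  apply: filter_forall_finite_set => // k' Kk'.
  have [Exk'|nExk'] := pselect (E x (act k' x)); last first.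
    by apply: filterS (near_clopen x (E_G_clopen k')) => y /= Eyk' /Eyk'.
  case: (minSx _ Exk') => [k'S|]; last rewrite Sx => kk'.
    have -> : k' = k by apply: (free_act_inj act_action act_free _ _ x); rewrite k'S.
    by apply: nearW => y _; left.
  have := near_lexlt C_clopen (act_continuous k x) (act_continuous k' x) kk'.
  by apply: filterS => y ? _; right.
apply: filterS2 Ek above => y Eyk above_y.
apply: (least_unique (@lexlt_trans _ C) (@lexlt_irr _ C) (leastS y)).
split => // z /[dup] Eyz /(E_within_K _ _)[k' Kk' zk'].
by rewrite zk'; apply: above_y => //; rewrite -zk'.
Qed.

End LeastSelector.

Arguments least_selector_locally_act {G X act E K C}
  act_action act_free act_continuous E_G_clopen K_finite E_within_K C_clopen {S}.

Theorem lemma3p6 (G : groupType) (R : realType) (X : completePseudoMetricType R)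
  (act : G -> X -> X) (E : X -> X -> Prop) (K : set G) :
  countable [set: G] ->
  hausdorff_space X -> separable_space X -> clopen_basis X ->
  is_group_action act -> free_action act ->
  (forall g : G, continuous (act g)) ->
  equiv_relP E -> finite_classes E -> G_clopen act E ->
  finite_set K ->
  (forall x y : X, E x y -> exists2 k : G, K k & y = act k x) ->
  exists S : X -> X,
    [/\ continuous S,
        G_clopen act (fun x y => y = S x),
        forall x : X, E x (S x) &
        forall x y : X, E x y <-> S x = S y].
Proof.
move=> _ hX sX cbX actP freeP actC Eeq finE cloE finK EK.
have [C [cloC sepC]] :=
  separating_clopen_seq sX (clopen_basis_zero_dimensional hX cbX).
have /choice[S leastS] : forall x, exists m, least (lexlt C) (E x) m.
  move=> x; apply: (finite_set_least (@lexlt_trans _ C) (lexlt_total sepC) (finE x)).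
  by exists x; case: Eeq => Erefl _ _; apply: Erefl.
have locS : locally_act act S :=
  least_selector_locally_act actP freeP actC cloE finK EK cloC leastS.
exists S; split.
- exact: locally_act_continuous.
- exact: locally_act_G_clopen.
- by move=> x; case: (leastS x).
- exact (least_class_selector (@lexlt_trans _ C) (@lexlt_irr _ C) Eeq leastS).
Qed.
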